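(* Let $\Lambda_1,\dots,\Lambda_m$ be mutually disjoint bounded open sets in $\mathbb R^d$ and $\Lambda=\bigcup_{j=1}^m\Lambda_j$. Let $E\subseteq\partial\Lambda$ be closed and $E_j=\partial\Lambda_j\cap E$. Then: (i) $E=\bigcup_{j=1}^mE_j$. (ii) Suppose that $\overline{\Lambda_j}\cap\overline{\Lambda_i}\subseteq E$ for every pair of indices $i\ne j$. For fixed $j$ and $\psi\in C^\infty_{E_j}(\Lambda_j)$, let $\Psi\in C^\infty_E(\mathbb R^d)$ be any function whose restriction to $\Lambda_j$ equals $\psi$. Then $\operatorname{supp}\Psi\cap\overline{\Lambda_j}$ and $\operatorname{supp}\Psi\cap\bigcup_{k\ne j}\overline{\Lambda_k}$ have positive distance to each other.
   Context: For an open set $\Lambda\subset\mathbb R^d$ and closed $F\subset\partial\Lambda$, $C^\infty_F(\Lambda)=\{v|_\Lambda: v\in C^\infty_0(\mathbb R^d),\ \operatorname{supp}v\cap F=\emptyset\}$; $C^\infty_E(\mathbb R^d)$ denotes the set of $v\in C^\infty_0(\mathbb R^d)$ with $\operatorname{supp}v\cap E=\emptyset$. *)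

From HB Require Import structures.
From mathcomp Require Import all_boot all_order all_algebra.
From mathcomp Require Import all_classical all_reals all_analysis.
Set Implicit Arguments. Unset Strict Implicit. Unset Printing Implicit Defensive.
Import Order.TTheory GRing.Theory Num.Theory.
Import numFieldNormedType.Exports.
Local Open Scope classical_set_scope.
Local Open Scope ring_scope.

(* R^d is modelled as row vectors 'rV[R]_d (a normed space over R). *)

Section Defs.
Variables (R : realType) (d : nat).
Notation V := 'rV[R]_d.

Definition boundary (A : set V) : set V := closure A `\` interior A.

Definition fsupp (f : V -> R) : set V := closure [set x | f x != 0].

Fixpoint Ck (k : nat) (f : V -> R) : Prop :=
  match k with
  | 0 => continuous f
  | k.+1 => continuous f /\
      forall i : 'I_d, (forall x, derivable f x (delta_mx 0 i)) /\
                        Ck k (fun x => derive f x (delta_mx 0 i))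
  end.

Definition smooth (f : V -> R) : Prop := forall k, Ck k f.

Definition Cinf0 (f : V -> R) : Prop := smooth f /\ compact (fsupp f).

Definition CinfE (E : set V) (f : V -> R) : Prop :=
  Cinf0 f /\ fsupp f `&` E = set0.

(* Functions on Lam are
   represented by total functions V -> R, only their values on Lam matter. *)
Definition CinfF_on (Lam F : set V) (psi : V -> R) : Prop :=
  exists v : V -> R, Cinf0 v /\ fsupp v `&` F = set0 /\
                     forall x, Lam x -> psi x = v x.

Definition pos_dist (A B : set V) : Prop :=
  exists2 eps : R, 0 < eps & forall x y, A x -> B y -> eps <= `|x - y|.

End Defs.

From HB Require Import structures.
From mathcomp Require Import all_boot all_order all_algebra.
From mathcomp Require Import all_classical all_reals all_analysis.
Import Order.TTheory GRing.Theory Num.Theory.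
Import numFieldNormedType.Exports.
Local Open Scope classical_set_scope.
Local Open Scope ring_scope.

Set Implicit Arguments.
Unset Strict Implicit.

(* (i): the closure of a finite union is the union of the closures, and a
   point outside the interior of the union is outside the interior of each
   member, so the boundary of the union lies in the union of the boundaries.
   (ii): both sets are closed subsets of the compact support of Psi, hence
   compact; a common point would lie in the closures of two distinct Lam_k,
   hence in E, which the support of Psi misses.  Disjoint compact sets are at
   positive distance. *)

Section finite_union_topology.
Variables (T : topologicalType) (I : choiceType) (P : set I) (A : I -> set T).
Hypothesis finP : finite_set P.

Lemma closed_bigcup_closure : closed (\bigcup_(i in P) closure (A i)).
Proof. by apply: closed_bigcup => // i _; exact: closed_closure. Qed.

Lemma closure_bigcup_finite :
  closure (\bigcup_(i in P) A i) = \bigcup_(i in P) closure (A i).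
Proof.
apply/seteqP; split; last first.
  by move=> x [i Pi]; apply: closureS => y Aiy; exists i.
rewrite [X in _ `<=` X](closure_id _).1; last exact: closed_bigcup_closure.
by apply: closureS => x [i Pi Aix]; exists i => //; exact: subset_closure.
Qed.

Lemma closure_bigcupD_interior_sub :
  closure (\bigcup_(i in P) A i) `\` (\bigcup_(i in P) A i)°
  `<=` \bigcup_(i in P) (closure (A i) `\` (A i)°).
Proof.
rewrite closure_bigcup_finite => x [[i Pi clx] notint].
exists i => //; split => // intx; apply: notint.
by apply: (interiorS _ intx) => y Aiy; exists i.
Qed.

End finite_union_topology.

Lemma disjoint_compact_dist_gt0 (R : realType) (V : normedModType R)
    (A B : set V) :
  compact A -> compact B -> A `&` B = set0 ->
  exists2 eps : R, 0 < eps & forall x y, A x -> B y -> eps <= `|x - y|.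
Proof.
move=> cA cB AB0.
have [->|/set0P [a Aa]] := eqVneq A set0; first by exists 1.
have [->|/set0P [b Bb]] := eqVneq B set0; first by exists 1.
have dist_cont : {within A `*` B, continuous (fun p : V * V => `|p.1 - p.2|)}.
  apply: continuous_subspaceT => p.
  apply: (@continuous_comp _ _ _ (fun p : V * V => p.1 - p.2) (Num.norm : V -> R)).
    by apply: cvgB; [exact: cvg_fst | exact: cvg_snd].
  exact: norm_continuous.
have [[x y] /set_mem [Ax By] dist_min] :=
  compact_EVT_min (ex_intro _ (a, b) (conj Aa Bb)) (compact_setX cA cB) dist_cont.
exists `|x - y| => [|x' y' Ax' By']; last exact: (dist_min (x', y') (mem_set _)).
rewrite normr_gt0 subr_eq0; apply/eqP => xy.
have : (A `&` B) x by split => //; rewrite xy.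
by rewrite AB0.
Qed.

Theorem lemma4p4 (R : realType) (d m : nat) (Lam : 'I_m -> set 'rV[R]_d)
  (E : set 'rV[R]_d) :
  (forall j, open (Lam j)) ->
  (forall j, bounded_set (Lam j)) ->
  (forall i j, i != j -> Lam i `&` Lam j = set0) ->
  closed E ->
  E `<=` boundary (\bigcup_(j in setT) Lam j) ->
  (* (i) *)
  (E = \bigcup_(j in setT) (boundary (Lam j) `&` E))
  /\
  (* (ii) *)
  ((forall i j, i != j -> closure (Lam j) `&` closure (Lam i) `<=` E) ->
   forall (j : 'I_m) (psi Psi : 'rV[R]_d -> R),
     CinfF_on (Lam j) (boundary (Lam j) `&` E) psi ->
     CinfE E Psi ->
     (forall x, Lam j x -> Psi x = psi x) ->
     pos_dist (fsupp Psi `&` closure (Lam j))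
              (fsupp Psi `&` \bigcup_(k in [set k | k != j]) closure (Lam k))).
Proof.
move=> _ _ _ _ E_bd; split.
  apply/seteqP; split; last by move=> x [j _ []].
  move=> x Ex; have [j _ bdx] := closure_bigcupD_interior_sub
    finite_finset (E_bd x Ex).
  by exists j.
move=> clI_E j _ Psi _ [[_ supp_cpt] supp_E0] _.
pose others := \bigcup_(k in [set k | k != j]) closure (Lam k).
have cpt_j : compact (fsupp Psi `&` closure (Lam j)).
  exact: compact_closedI supp_cpt (@closed_closure _ (Lam j)).
have cpt_others : compact (fsupp Psi `&` others).
  exact: compact_closedI supp_cpt (closed_bigcup_closure finite_finset).
apply: disjoint_compact_dist_gt0 cpt_j cpt_others _.
apply/seteqP; split => // x [[suppx clj] [_ [k kj clk]]].
by rewrite -supp_E0; split => //; exact: (clI_E k j).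
Qed.
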